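(* Let $k\geq 3$ be an integer and let $H$ be a $k$-vertex graph which is not the $k$-clique. Then any deterministic distributed dynamic data structure for $H$ membership listing that handles edge insertions and deletions requires $\Omega\left(\frac{n}{\log n}\right)$ amortized rounds.
   Context: Highly dynamic network model: a synchronous network on a fixed set $V$ of $n$ nodes with unique identifiers starts as the empty graph; at the beginning of round $i$ the graph is $G_i=(V,E_i)$, obtained from the previous graph by an adversary inserting and/or deleting an arbitrary (unbounded) set of edges. At the start of each round every node is notified only of the insertions/deletions of edges incident to it; then each node may send a message of $O(\log n)$ bits to each of its current neighbors. A distributed dynamic data structure consists of a local part $DS_v$ at each node $v$; at the end of every round, $DS_v$ may be queried and must answer immediately, without any further communication, either with a correct answer to the query or with $\texttt{inconsistent}$. The amortized round complexity is at most $c$ if for every round $i$, the number of rounds up to round $i$ in which at least one node $v$ has $DS_v$ in an inconsistent state, divided by the total number of topology changes that occurred up to round $i$, is at most $c$. $H$ membership listing: $DS_v$ at each node $v$ must respond at the end of round $i$ to a query consisting of a copy of $H$ on a $k$-element node set containing $v$ with $\texttt{true}$ if this copy of $H$ is present in $G_i$, $\texttt{false}$ if it is not, or $\texttt{inconsistent}$. *)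

From mathcomp Require Import all_boot all_order all_algebra.
Set Implicit Arguments. Unset Strict Implicit. Unset Printing Implicit Defensive.
Import GRing.Theory Num.Theory.

(* A dynamic graph sequence on node set 'I_n: G i is the graph at round i
   (adjacency relation); G 0 is the initial (empty) graph. *)
Definition dyn_graph (n : nat) := nat -> 'I_n -> 'I_n -> bool.

Definition valid_dyn_graph n (G : dyn_graph n) : Prop :=
  [/\ (forall i u v, G i u v = G i v u),
      (forall i u, G i u u = false) &
      (forall u v, G 0 u v = false)].

Definition changes_at n (G : dyn_graph n) (j : nat) : nat :=
  #|[set p : 'I_n * 'I_n | (p.1 < p.2) && (G j p.1 p.2 != G j.-1 p.1 p.2)]|.

(* A query at v is a labelled copy f : 'I_k -> 'I_n (injective, v in its image);
   the answer is Some b (true/false) or None (= inconsistent). *)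
Record dyn_alg (n k : nat) := DynAlg {
  state : Type;
  init : 'I_n -> state;
  (* local notification of the incident edge changes:
     for each u, (was uv an edge before, is uv an edge now) *)
  notify : 'I_n -> state -> ('I_n -> bool * bool) -> state;
  send : 'I_n -> state -> 'I_n -> seq bool;
  (* state update on receipt of messages (Some m from current neighbours) *)
  recv : 'I_n -> state -> ('I_n -> option (seq bool)) -> state;
  answer : 'I_n -> state -> {ffun 'I_k -> 'I_n} -> option bool }.
Arguments state {n k} _.
Arguments init {n k} _.
Arguments notify {n k} _.
Arguments send {n k} _.
Arguments recv {n k} _.
Arguments answer {n k} _.

Definition bandwidth n k (A : dyn_alg n k) (B : nat) : Prop :=
  forall v s u, size (send A v s u) <= B.

Fixpoint run n k (A : dyn_alg n k) (G : dyn_graph n) (i : nat)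
  : 'I_n -> state A :=
  match i with
  | 0 => init A
  | j.+1 =>
      let prev := run A G j in
      let s1 := fun v => notify A v (prev v) (fun u => (G j v u, G j.+1 v u)) in
      fun v => recv A v (s1 v)
                 (fun u => if G j.+1 v u then Some (send A u (s1 u) v) else None)
  end.

Definition present n k (H : rel 'I_k) (G : dyn_graph n) (i : nat)
  (f : {ffun 'I_k -> 'I_n}) : bool :=
  [forall a, forall b, (a != b) ==> (G i (f a) (f b) == H a b)].

Definition valid_query n k (v : 'I_n) (f : {ffun 'I_k -> 'I_n}) : bool :=
  injectiveb f && (v \in codom f).

Definition correct n k (H : rel 'I_k) (A : dyn_alg n k) : Prop :=
  forall G : dyn_graph n, valid_dyn_graph G ->
  forall i v f b, valid_query v f ->
    answer A v (run A G i.+1 v) f = Some b -> b = present H G i.+1 f.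

Definition inconsistent_round n k (A : dyn_alg n k) (G : dyn_graph n) (j : nat)
  : bool :=
  [exists v, exists f : {ffun 'I_k -> 'I_n},
     valid_query v f && (answer A v (run A G j v) f == None)].

Definition amortized_at_most n k (A : dyn_alg n k) (c : rat) : Prop :=
  forall G : dyn_graph n, valid_dyn_graph G -> forall i : nat,
    (((\sum_(1 <= j < i.+1) inconsistent_round A G j)%N%:R : rat)
      <= c * ((\sum_(1 <= j < i.+1) changes_at G j)%N%:R))%R.

(* Fix a non-edge r p2 of H and a third vertex p1.  In the first round the
   adversary builds H minus {r, p2} on k nodes together with m copies of p2,
   the y-th copy being adjacent to p1 iff bit y of a secret string is set;
   afterwards, every D rounds, it attaches one more copy of r to the template.
   As r p2 is a non-edge, the q-th copy of r can correctly answer the query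
   sending r to itself and p2 to the y-th copy of p2 only if it knows bit y.
   Yet its own incident edges do not depend on the secret, so during its
   window of D rounds its state is a function of the O(D k log n) bits it has
   received.  If every secret left some consistent round, the secret would be
   determined by a window, a round and a transcript; counting shows that some
   secret keeps all P D rounds inconsistent, while only O(k n) topology changes
   happen.  Taking m = P ~ n / 2 and D ~ n / (k log n) gives Omega(n / log n). *)

From mathcomp Require Import all_boot all_order all_algebra.
From mathcomp Require Import zify.
From Stdlib Require Import FunctionalExtensionality.
Import Order.TTheory GRing.Theory Num.Theory.
Set Implicit Arguments. Unset Strict Implicit. Unset Printing Implicit Defensive.

Definition notified n k (A : dyn_alg n k) (G : dyn_graph n) (i : nat) (u : 'I_n)
  : state A :=
  notify A u (run A G i.-1 u) (fun w => (G i.-1 u w, G i u w)).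

Lemma run_eq_local n k (A : dyn_alg n k) (G G' : dyn_graph n) (v : 'I_n) (r : nat) :
  (forall i, i <= r -> G i v =1 G' i v) ->
  (forall i u, 0 < i <= r -> G i v u ->
     send A u (notified A G i u) v = send A u (notified A G' i u) v) ->
  run A G r v = run A G' r v.
Proof.
elim: r => [//|r IH] sameG sameMsg /=.
rewrite IH => [|i Hi|i u Hi]; last 2 first.
- by apply: sameG; lia.
- by apply: sameMsg; lia.
have -> : (fun u => (G r v u, G r.+1 v u)) = (fun u => (G' r v u, G' r.+1 v u)).
  by apply: functional_extensionality => u; rewrite !sameG.
congr (recv A v _ _); apply: functional_extensionality => u.
rewrite -sameG //; case Gvu: (G r.+1 v u) => //.
by rewrite (sameMsg r.+1 u _ Gvu) //=; lia.
Qed.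

Lemma card_le_cover (S I T : finType) (P : I -> pred S) (f : I -> S -> T) :
  (forall s, exists i, P i s) -> (forall i, {in P i &, injective (f i)}) ->
  #|S| <= #|I| * #|T|.
Proof.
move=> cover inj.
apply: (@leq_trans (\sum_(i : I) #|[pred s | P i s]|)).
  rewrite -sum1_card; under [X in _ <= X]eq_bigr => i _ do rewrite -sum1_card big_mkcond.
  rewrite exchange_big /=; apply: leq_sum => s _.
  have [i Pis] := cover s.
  by rewrite (bigD1 i) //= inE Pis leq_addr.
rewrite -sum_nat_const; apply: leq_sum => i _.
exact: leq_card_in (inj i).
Qed.

Lemma card_le_codom (T U : finType) (f : U -> T) (X : {pred T}) :
  {subset X <= codom f} -> #|X| <= #|U|.
Proof.
move=> /subsetP/subset_leq_card/leq_trans; apply.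
by rewrite -(size_codom f) card_size.
Qed.

Lemma sum_nat_blocks (f : nat -> nat) P D :
  \sum_(1 <= j < (P * D).+1) f j = \sum_(q < P) \sum_(t < D) f (q * D + t).+1.
Proof.
elim: P => [|P IH]; first by rewrite mul0n big_ord0 big_geq.
rewrite big_ord_recr /= -IH (big_cat_nat _ (n := (P * D).+1)) //=; last first.
  by rewrite ltnS mulSn; lia.
congr (_ + _); rewrite -[X in \sum_(X <= _ < _) _]add0n big_addn big_mkord.
have -> : (P.+1 * D).+1 - (P * D).+1 = D by rewrite mulSn; lia.
by apply: eq_bigr => t _; congr f; lia.
Qed.

Lemma sq_le_exp2 L : 4 <= L -> L * L <= 2 ^ L.
Proof.
elim: L => // L IH; rewrite leq_eqVlt => /orP [/eqP <- //|].
rewrite ltnS => L4; have := IH L4; have := leq_mul L4 (leqnn L); rewrite expnS; lia.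
Qed.

Lemma four_sq_lt_exp2 h : 10 <= h -> 4 * h * h < 2 ^ h.
Proof.
elim: h => // h IH; rewrite leq_eqVlt => /orP [/eqP <- //|].
rewrite ltnS => h10; have := IH h10; have := leq_mul h10 (leqnn h); rewrite expnS; lia.
Qed.

Lemma blocks_transcripts_lt_exp2 m P D B k :
  P <= m -> D <= m -> D * (4 * k * B.+1) <= m -> 20 <= m ->
  P * D * (B.+1 * 2 ^ B) ^ (D * k) < 2 ^ m.
Proof.
move=> Pm Dm Dsmall m20.
have msg_le : B.+1 * 2 ^ B <= 2 ^ (2 * B.+1).
  apply: leq_trans (_ : 2 ^ B * 2 ^ B <= _); first by rewrite leq_mul2r ltn_expl ?orbT.
  by rewrite -expnD leq_exp2l //; lia.
set X := 2 * B.+1 * (D * k).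
have transcripts_le : (B.+1 * 2 ^ B) ^ (D * k) <= 2 ^ X.
  by rewrite /X (expnM 2); case: (posnP (D * k)) => [->|pos] //; rewrite leq_exp2r.
have X_half : X * 2 <= m by rewrite /X; lia.
set h := m - X.
have m_eq : m = X + h by rewrite /h; lia.
have h_lt : 4 * h * h < 2 ^ h by apply: four_sq_lt_exp2; lia.
have PD_le : P * D <= m * m by apply: leq_mul.
have mm_le : m * m <= 4 * h * h by nia.
rewrite m_eq expnD.
apply: (@leq_ltn_trans (m * m * 2 ^ X)); first exact: leq_mul.
rewrite mulnC ltn_pmul2l ?expn_gt0 //; lia.
Qed.

Lemma exists_non_edge k (H : rel 'I_k) :
  ~ (forall a b, a != b -> H a b) -> exists r p2, r != p2 /\ ~~ H r p2.
Proof.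
move=> not_complete.
case: (boolP [exists a, exists b, (a != b) && ~~ H a b]).
  by move=> /existsP [a /existsP [b /andP [ab Hab]]]; exists a, b.
move=> /existsPn all_edges; exfalso; apply: not_complete => a b ab.
by move: (all_edges a) => /existsPn /(_ b); rewrite ab negbK.
Qed.

Lemma exists_third k (r p2 : 'I_k) : 3 <= k -> exists2 p1, r != p1 & p1 != p2.
Proof.
move=> k3; have : 0 < #|~: [set r; p2]|.
  by have := cardsC [set r; p2]; rewrite cards2 card_ord; lia.
case/card_gt0P => p1; rewrite !inE negb_or => /andP [p1r p1p2].
by exists p1; rewrite // eq_sym.
Qed.

Section HardInstance.
Variables (k : nat) (H : rel 'I_k) (r p1 p2 : 'I_k) (m P D : nat).
Hypothesis Hsym : symmetric H.

Definition Hnat (x y : nat) : bool :=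
  match (insub x : option 'I_k), (insub y : option 'I_k) with
  | Some a, Some b => H a b
  | _, _ => false
  end.

Lemma Hnat_val (a b : 'I_k) : Hnat a b = H a b.
Proof. by rewrite /Hnat !valK. Qed.

Lemma Hnat_sym x y : Hnat x y = Hnat y x.
Proof. by rewrite /Hnat; case: insub => [a|]; case: insub => [b|]. Qed.

(* Node layout: the nodes t < k other than r and p2 carry H restricted to them;
   node k + y (y < m) is a copy of p2 whose edge to p1 is the bit g y; node
   k + m + q (q < P) is a copy of r, attached at round q * D + 1. *)
Definition hard_arc (g : nat -> bool) (i x y : nat) : bool :=
  [&& x < k, x != r, x != p2 &
    if y < k then [&& y != r, y != p2 & Hnat x y]
    else if y < k + m then (if x == p1 then g (y - k) else Hnat x p2)
    else if y < k + m + P then ((y - k - m) * D < i) && Hnat r x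
    else false].

Definition hard_adj g i x y :=
  [&& i != 0, x != y & hard_arc g i x y || hard_arc g i y x].

Lemma hard_adjC g i x y : hard_adj g i x y = hard_adj g i y x.
Proof. by rewrite /hard_adj (eq_sym y x) orbC. Qed.

Lemma hard_adj_probe g i q y : q < P ->
  hard_adj g i (k + m + q) y =
  [&& i != 0, y < k, y != r, y != p2, q * D < i & Hnat r y].
Proof.
move=> qP; rewrite /hard_adj /hard_arc.
have -> : (k + m + q < k) = false by lia.
have -> : (k + m + q < k + m) = false by lia.
have -> : (k + m + q < k + m + P) by lia.
have -> : k + m + q - k - m = q by lia.
case: (i != 0) => //=; case yk: (y < k) => /=; last by rewrite !andbF.
by have -> : (k + m + q != y) by lia.
Qed.

Lemma hard_adj_slot g i y t : y < m -> t < k ->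
  hard_adj g i (k + y) t =
  [&& i != 0, t != r, t != p2 & if t == p1 then g y else Hnat t p2].
Proof.
move=> ym tk; rewrite /hard_adj /hard_arc.
have -> : (k + y < k) = false by lia.
have -> : (k + y != t) by lia.
have -> : (k + y < k + m) by lia.
have -> : k + y - k = y by lia.
by rewrite /= tk.
Qed.

Lemma hard_adj_template g i t t' : t < k -> t' < k -> t != t' ->
  hard_adj g i t t' = [&& i != 0, t != r, t != p2, t' != r, t' != p2 & Hnat t t'].
Proof.
move=> tk t'k tt'; rewrite /hard_adj /hard_arc tk t'k tt' /= (Hnat_sym t' t).
by case: (t != r); case: (t != p2); case: (t' != r); case: (t' != p2);
  case: (Hnat t t'); rewrite ?andbF.
Qed.

Hypotheses (rp1 : r != p1) (rp2 : r != p2) (p12 : p1 != p2) (Hrp2 : ~~ H r p2).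

Definition copy_at (q y : nat) (t : 'I_k) : nat :=
  if t == r then k + m + q else if t == p2 then k + y else t.

Definition patched (b : bool) (a a' : 'I_k) : bool :=
  if ((a == p1) && (a' == p2)) || ((a == p2) && (a' == p1)) then b else H a a'.

Lemma patchedC b a a' : patched b a a' = patched b a' a.
Proof.
by rewrite /patched Hsym; case: (a == p1); case: (a' == p2); case: (a == p2);
  case: (a' == p1).
Qed.

Lemma hard_adj_copy_r g i q y a : q < P -> y < m -> i != 0 -> q * D < i -> a != r ->
  hard_adj g i (copy_at q y r) (copy_at q y a) = patched (g y) r a.
Proof.
move=> qP ym i0 qi ar.
rewrite /copy_at eqxx (negbTE ar) hard_adj_probe // i0 qi /patched.
rewrite (negbTE rp1) (negbTE rp2) /=.
case: ifP => [/eqP -> | ap2]; first by rewrite (negbTE Hrp2); case: ltnP => //; lia.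
move: ar ap2; rewrite ltn_ord -!(inj_eq val_inj) /= => -> ->.
by rewrite Hnat_val.
Qed.

Lemma hard_adj_copy_p2 g i q y a : y < m -> i != 0 -> a != r -> a != p2 ->
  hard_adj g i (copy_at q y p2) (copy_at q y a) = patched (g y) p2 a.
Proof.
move=> ym i0 ar ap2.
rewrite /copy_at eqxx (negbTE ar) (negbTE ap2) (eq_sym p2 r) (negbTE rp2).
rewrite hard_adj_slot // i0 /patched (eq_sym p2 p1) (negbTE p12) eqxx /=.
move: ar ap2; rewrite -!(inj_eq val_inj) /= => -> ->.
by case: eqP => //= _; rewrite Hnat_val Hsym.
Qed.

Lemma hard_adj_copy g i q y a a' : q < P -> y < m -> i != 0 -> q * D < i -> a != a' ->
  hard_adj g i (copy_at q y a) (copy_at q y a') = patched (g y) a a'.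
Proof.
move=> qP ym i0 qi.
have [-> ra' | ar] := eqVneq a r; first by apply: hard_adj_copy_r; rewrite // eq_sym.
have [-> _ | a'r] := eqVneq a' r.
  by rewrite hard_adjC patchedC; apply: hard_adj_copy_r.
have [-> p2a' | ap2] := eqVneq a p2; first by apply: hard_adj_copy_p2; rewrite // eq_sym.
have [-> _ | a'p2] := eqVneq a' p2.
  by rewrite hard_adjC patchedC; apply: hard_adj_copy_p2.
move=> aa'; rewrite /copy_at (negbTE ar) (negbTE a'r) (negbTE ap2) (negbTE a'p2).
rewrite hard_adj_template // i0 ar a'r ap2 a'p2 Hnat_val /patched.
by rewrite (negbTE ap2) (negbTE a'p2) !andbF.
Qed.

Lemma copy_at_inj q y : q < P -> y < m -> injective (copy_at q y).
Proof.
move=> qP ym a a'; rewrite /copy_at; have ak := ltn_ord a; have a'k := ltn_ord a'.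
case ar: (a == r); case a'r: (a' == r); case ap2: (a == p2); case a'p2: (a' == p2);
  move=> E; try lia.
all: try by move/eqP: ar => ->; move/eqP: a'r => ->.
all: try by move/eqP: ap2 => ->; move/eqP: a'p2 => ->.
all: exact: val_inj.
Qed.

Variable n : nat.
Hypothesis room : k + m + P <= n.+1.

Definition hard_graph (g : nat -> bool) : dyn_graph n.+1 :=
  fun i u v => hard_adj g i u v.

Lemma hard_graph_valid g : valid_dyn_graph (hard_graph g).
Proof.
split=> [i u v | i u | u v]; rewrite /hard_graph; first exact: hard_adjC.
  by rewrite /hard_adj eqxx andbF.
by [].
Qed.

Definition probe (q : nat) : 'I_n.+1 := inord (k + m + q).

Lemma probe_val q : q < P -> probe q = k + m + q :> nat.
Proof. by move=> qP; rewrite /probe inordK //; lia. Qed.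

Lemma hard_graph_probe g i q (u : 'I_n.+1) : q < P ->
  hard_graph g i (probe q) u =
  [&& i != 0, u < k, u != r :> nat, u != p2 :> nat, q * D < i & Hnat r u].
Proof. by move=> qP; rewrite /hard_graph probe_val // hard_adj_probe. Qed.

Definition copy (q y : nat) : {ffun 'I_k -> 'I_n.+1} := [ffun t => inord (copy_at q y t)].

Lemma copy_val q y t : q < P -> y < m -> copy q y t = copy_at q y t :> nat.
Proof.
move=> qP ym; rewrite ffunE inordK // /copy_at ltnS.
by case: ifP => _; last case: ifP => _; have := ltn_ord t; lia.
Qed.

Lemma valid_copy q y : q < P -> y < m -> valid_query (probe q) (copy q y).
Proof.
move=> qP ym; apply/andP; split.
  by apply/injectiveP => a a' /(congr1 (@nat_of_ord _)); rewrite !copy_val //; apply: copy_at_inj.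
by apply/codomP; exists r; apply: val_inj; rewrite /= copy_val // probe_val // /copy_at eqxx.
Qed.

Lemma present_copy g i q y : q < P -> y < m -> i != 0 -> q * D < i ->
  present H (hard_graph g) i (copy q y) = (g y == H p1 p2).
Proof.
move=> qP ym i0 qi.
have adjE a a' : a != a' ->
    (hard_graph g i (copy q y a) (copy q y a') == H a a') = (patched (g y) a a' == H a a').
  by move=> aa'; rewrite /hard_graph !copy_val // hard_adj_copy.
apply/idP/idP.
  by move/forallP/(_ p1)/forallP/(_ p2); rewrite p12 adjE // /patched !eqxx.
move=> gyE; apply/forallP => a; apply/forallP => a'; apply/implyP => aa'.
rewrite adjE // /patched; case: ifP => // /orP [] /andP [/eqP -> /eqP ->] //.
by rewrite Hsym.
Qed.

Lemma hard_arc_change g i i' x y : hard_arc g i x y != hard_arc g i' x y ->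
  x < k /\ exists2 w, y = k + m + w & (w * D < i) != (w * D < i').
Proof.
rewrite /hard_arc; case: ltnP => // xk; case: (x != r); case: (x != p2) => //=.
case: ltnP => [_ | yk]; first by rewrite eqxx.
case: ltnP => [_ | ykm]; first by rewrite eqxx.
case: ltnP => _; last by rewrite eqxx.
case: (Hnat r x); rewrite ?andbT ?andbF // => changed.
by split=> //; exists (y - k - m) => //; lia.
Qed.

Lemma hard_adj_change g i i' x y : i != 0 -> i' != 0 ->
  hard_adj g i x y != hard_adj g i' x y ->
  hard_arc g i x y != hard_arc g i' x y \/ hard_arc g i y x != hard_arc g i' y x.
Proof.
move=> i0 i'0; rewrite /hard_adj i0 i'0; case: (x != y) => //=.
case: (hard_arc g i x y); case: (hard_arc g i' x y); case: (hard_arc g i y x);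
  case: (hard_arc g i' y x) => //= _; by [left | right].
Qed.

Lemma no_join_inside_window w q t : 0 < t < D ->
  (w * D < (q * D + t).+1) = (w * D < q * D + t).
Proof.
move=> tD; case: (leqP w q) => wq; have := leq_mul wq (leqnn D); first by lia.
by rewrite mulSn; lia.
Qed.

Lemma join_at_window_start w q : 0 < D ->
  (w * D < (q * D).+1) != (w * D < q * D) -> w = q.
Proof.
move=> D0; rewrite ltnS leq_eqVlt; case: ltnP => [_ | _]; rewrite ?orbT //=.
by rewrite orbF eqbF_neg negbK eqn_pmul2r // => /eqP.
Qed.

Lemma changes_inside_window g q t : 0 < t < D -> changes_at (hard_graph g) (q * D + t).+1 = 0.
Proof.
move=> tD; apply/eqP; rewrite cards_eq0; apply/eqP/setP => [[x y]]; rewrite !inE /=.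
apply/negbTE; rewrite negb_and; apply/orP; right; rewrite negbK; apply/negPn/negP.
have i0 : q * D + t != 0 by lia.
by case/(@hard_adj_change g (q * D + t).+1 _ x y isT i0) => /hard_arc_change [_ [w _]];
  rewrite no_join_inside_window // eqxx.
Qed.

Lemma changes_window_start g q : 0 < D -> 0 < q < P ->
  changes_at (hard_graph g) (q * D).+1 <= k * 2.
Proof.
move=> D0 qP; have <- : #|{: 'I_k * bool}| = k * 2 by rewrite card_prod card_ord card_bool.
apply: (@card_le_codom _ _ (fun ab : 'I_k * bool =>
  if ab.2 then (inord ab.1, probe q) else (probe q, inord ab.1))) => [[x y]].
rewrite inE /= => /andP [_ changed].
have i0 : q * D != 0 by rewrite muln_eq0 negb_or; lia.
have [] := @hard_adj_change g (q * D).+1 _ x y isT i0 changed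
  => /hard_arc_change [xk [w yE /(join_at_window_start D0) wq]].
- apply/codomP; exists (Ordinal xk, true).
  by congr pair; apply: val_inj; rewrite /= ?inordK ?probe_val //; lia.
- apply/codomP; exists (Ordinal xk, false).
  by congr pair; apply: val_inj; rewrite /= ?inordK ?probe_val //; lia.
Qed.

Lemma changes_round1 g : changes_at (hard_graph g) 1 <= k * n.+1 * 2.
Proof.
have <- : #|{: 'I_k * 'I_n.+1 * bool}| = k * n.+1 * 2.
  by rewrite !card_prod !card_ord card_bool.
apply: (@card_le_codom _ _ (fun ab : 'I_k * 'I_n.+1 * bool =>
  if ab.2 then (inord ab.1.1, ab.1.2) else (ab.1.2, inord ab.1.1))) => [[x y]].
rewrite inE /hard_graph /hard_adj /= eqbF_neg negbK => /andP [_ /andP [_ /orP []]].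
- rewrite /hard_arc; case: ltnP => // xk _; apply/codomP; exists (Ordinal xk, y, true).
  by congr pair; apply: val_inj; rewrite /= inordK.
- rewrite /hard_arc; case: ltnP => // yk _; apply/codomP; exists (Ordinal yk, x, false).
  by congr pair; apply: val_inj; rewrite /= inordK.
Qed.

Lemma changes_window g q : 0 < D ->
  \sum_(t < D) changes_at (hard_graph g) (q * D + t).+1 = changes_at (hard_graph g) (q * D).+1.
Proof.
move=> D0; rewrite -(big_mkord xpredT (fun t => changes_at (hard_graph g) (q * D + t).+1)).
rewrite big_ltn // addn0 big_nat_cond big1 ?addn0 // => t /andP [/andP [t1 tD] _].
by rewrite changes_inside_window // t1.
Qed.

Lemma changes_total g : 0 < D -> 0 < P ->
  \sum_(1 <= j < (P * D).+1) changes_at (hard_graph g) j <= k * n.+1 * 2 + P * (k * 2).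
Proof.
move=> D0 P0; rewrite sum_nat_blocks.
under eq_bigr => q _ do rewrite changes_window //.
rewrite -(big_mkord xpredT (fun q => changes_at (hard_graph g) (q * D).+1)) big_ltn //.
rewrite mul0n leq_add ?changes_round1 //.
apply: leq_trans (_ : \sum_(1 <= q < P) (k * 2) <= _).
  rewrite big_nat_cond [X in _ <= X]big_nat_cond; apply: leq_sum => q /andP [qP _].
  exact: changes_window_start.
by rewrite sum_nat_const_nat leq_mul2r; apply/orP; right; lia.
Qed.

Variables (A : dyn_alg n.+1 k) (B : nat).
Hypotheses (HB : bandwidth A B) (HA : correct H A).

Definition encode_msg (s : seq bool) : 'I_B.+1 * {ffun 'I_B -> bool} :=
  (inord (size s), [ffun j : 'I_B => nth false s j]).

Lemma encode_msg_inj s s' : size s <= B -> size s' <= B ->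
  encode_msg s = encode_msg s' -> s = s'.
Proof.
move=> sB s'B [] /(congr1 val); rewrite /= !inordK // => size_eq /ffunP nth_eq.
apply: (eq_from_nth (x0 := false) size_eq) => j js.
by have := nth_eq (Ordinal (leq_trans js sB)); rewrite !ffunE.
Qed.

Definition transcript g q : {ffun 'I_D * 'I_k -> 'I_B.+1 * {ffun 'I_B -> bool}} :=
  [ffun p : 'I_D * 'I_k => encode_msg
     (send A (inord p.2) (notified A (hard_graph g) (q * D + p.1).+1 (inord p.2)) (probe q))].

Lemma probe_state_eq g g' q t : q < P -> t < D -> transcript g q = transcript g' q ->
  run A (hard_graph g) (q * D + t).+1 (probe q) = run A (hard_graph g') (q * D + t).+1 (probe q).
Proof.
move=> qP tD same_tr; apply: run_eq_local => [i _ u | i u i_le].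
  by rewrite !hard_graph_probe.
rewrite hard_graph_probe // => /and5P [_ uk _ _ /andP [qi _]].
have i_off : i.-1 - q * D < D by lia.
have iE : i = (q * D + Ordinal i_off).+1 by rewrite /=; lia.
have uE : u = inord (Ordinal uk) by rewrite /= inord_val.
move/ffunP: same_tr => /(_ (Ordinal i_off, Ordinal uk)).
by rewrite !ffunE /= -iE -uE; apply: encode_msg_inj; apply: HB.
Qed.

Lemma consistent_probe_determines g g' q t : q < P -> t < D ->
  ~~ inconsistent_round A (hard_graph g) (q * D + t).+1 ->
  run A (hard_graph g) (q * D + t).+1 (probe q) = run A (hard_graph g') (q * D + t).+1 (probe q) ->
  {in gtn m, g =1 g'}.
Proof.
move=> qP tD consistent same_state y ym.
have valid := valid_copy qP ym.
set st := run A (hard_graph g) _ (probe q) in consistent same_state.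
have [b ans] : exists b, answer A (probe q) st (copy q y) = Some b.
  move/existsPn: consistent => /(_ (probe q)) /existsPn /(_ (copy q y)).
  by rewrite valid; case: answer => [b|] // _; exists b.
have ans' := ans; rewrite same_state in ans'.
have := HA (hard_graph_valid g) valid ans; have := HA (hard_graph_valid g') valid ans'.
have started : q * D < (q * D + t).+1 by lia.
rewrite !present_copy // => -> /eqP.
by case: (g y); case: (g' y); case: (H p1 p2).
Qed.

Definition bits (s : {ffun 'I_m -> bool}) (y : nat) : bool :=
  if insub y is Some j then s j else false.

Lemma card_strings_le_transcripts :
  (forall s : {ffun 'I_m -> bool}, exists q : 'I_P, exists t : 'I_D,
     ~~ inconsistent_round A (hard_graph (bits s)) (q * D + t).+1) ->
  2 ^ m <= P * D * (B.+1 * 2 ^ B) ^ (D * k).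
Proof.
move=> some_consistent.
have := @card_le_cover _ _ _
  (fun (qt : 'I_P * 'I_D) s => ~~ inconsistent_round A (hard_graph (bits s)) (qt.1 * D + qt.2).+1)
  (fun (qt : 'I_P * 'I_D) (s : {ffun 'I_m -> bool}) => transcript (bits s) qt.1).
rewrite card_ffun card_bool !card_prod !card_ord card_ffun card_prod !card_ord.
rewrite card_ffun card_bool card_ord card_prod !card_ord; apply.
  by move=> s; have [q [t ?]] := some_consistent s; exists (q, t).
move=> [q t] s s' consistent _ /(probe_state_eq (ltn_ord q) (ltn_ord t)).
move/(consistent_probe_determines (ltn_ord q) (ltn_ord t) consistent) => same_bits.
by apply/ffunP => y; have := same_bits y (ltn_ord y); rewrite /bits valK.
Qed.

Lemma exists_always_inconsistent :
  P * D * (B.+1 * 2 ^ B) ^ (D * k) < 2 ^ m ->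
  exists g, forall q t, q < P -> t < D ->
    inconsistent_round A (hard_graph g) (q * D + t).+1.
Proof.
move=> few_transcripts.
case: (boolP [exists s, [forall q : 'I_P, [forall t : 'I_D,
    inconsistent_round A (hard_graph (bits s)) (q * D + t).+1]]]).
  move=> /existsP [s /forallP always]; exists (bits s) => q t qP tD.
  by have /forallP/(_ (Ordinal tD)) := always (Ordinal qP).
move=> /existsPn never; exfalso; move: few_transcripts; rewrite ltnNge => /negP; apply.
apply: card_strings_le_transcripts => s.
by have /forallPn [q /forallPn [t ?]] := never s; exists q, t.
Qed.

Lemma amortized_ge_hard (c : rat) : amortized_at_most A c -> 0 < D -> 0 < P ->
  P * D * (B.+1 * 2 ^ B) ^ (D * k) < 2 ^ m ->
  ((P * D)%:R <= c * (k * n.+1 * 2 + P * (k * 2))%:R)%R.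
Proof.
move=> amortized D0 P0 few_transcripts.
have [g always] := exists_always_inconsistent few_transcripts.
have all_rounds : \sum_(1 <= j < (P * D).+1) inconsistent_round A (hard_graph g) j = P * D.
  rewrite sum_nat_blocks (eq_bigr (fun _ => D)) ?sum_nat_const ?card_ord // => q _.
  rewrite (eq_bigr (fun _ => 1)) ?sum_nat_const ?card_ord ?muln1 // => t _.
  by rewrite always.
have := amortized _ (hard_graph_valid g) (P * D); rewrite all_rounds => rounds_le.
have c_ge0 : (0 <= c)%R.
  rewrite leNgt; apply/negP => c_lt0.
  have := le_trans rounds_le (mulr_le0_ge0 (ltW c_lt0) (ler0n _ _)).
  by rewrite lern0 muln_eq0; lia.
by apply: (le_trans rounds_le); rewrite ler_wpM2l // ler_nat changes_total.
Qed.

End HardInstance.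

Lemma cost_ratio_le k C L n m D :
  m <= n <= 4 * m -> m <= 8 * (D * (k * (C.+1 * L))) ->
  n * (k * n * 2 + m * (k * 2)) <= m * D * (1024 * k * k * C.+1 * L).
Proof.
move=> /andP [m_le_n n_le] m_le; set X := D * (k * (C.+1 * L)) in m_le *.
have -> : m * D * (1024 * k * k * C.+1 * L) = 1024 * k * m * X by rewrite /X; lia.
have cost_le : n * (k * n * 2 + m * (k * 2)) <= 4 * k * (n * n).
  have : m * (k * n) <= n * (k * n) by rewrite leq_mul2r m_le_n orbT.
  by lia.
have nn_le : 4 * k * (n * n) <= 4 * k * (4 * m * (4 * m)).
  by rewrite leq_mul2l leq_mul ?orbT.
have mm_le : 64 * k * (m * m) <= 64 * k * (m * (8 * X)).
  by rewrite leq_mul2l leq_mul ?orbT.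
lia.
Qed.

Lemma hard_parameters k C n : 0 < k -> 2 ^ (32 * k * C.+1 + 4) + 2 * k + 2 <= n ->
  exists m D, [/\ 0 < D, 0 < m, k + m + m <= n,
    m * D * ((C * trunc_log 2 n).+1 * 2 ^ (C * trunc_log 2 n)) ^ (D * k) < 2 ^ m &
    n * (k * n * 2 + m * (k * 2)) <= m * D * (1024 * k * k * C.+1 * trunc_log 2 n)].
Proof.
move=> k0 n_large; set L := trunc_log 2 n; set B := C * L.
have L_large : 32 * k * C.+1 + 4 <= L by apply: trunc_log_max => //; lia.
have L_le : 2 ^ L <= n by apply: trunc_logP; lia.
have LL_le : L * L <= 2 ^ L by apply: sq_le_exp2; lia.
have QL_le : 32 * k * C.+1 * L <= L * L by apply: leq_mul; lia.
have BL_le : k * B.+1 <= k * (C.+1 * L) by rewrite leq_mul2l /B; apply/orP; right; lia.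
(* D is chosen so that the transcripts of a window carry at most m / 2 bits. *)
set m := (n - k) %/ 2; set Qd := 4 * k * B.+1; set D := m %/ Qd.
exists m, D.
have Qd0 : 0 < Qd by rewrite /Qd; lia.
have m_eq : n - k = m * 2 + (n - k) %% 2 by rewrite /m -divn_eq.
have m_rem : (n - k) %% 2 < 2 by rewrite ltn_pmod.
have D_eq : m = D * Qd + m %% Qd by rewrite /D -divn_eq.
have D_rem : m %% Qd < Qd by rewrite ltn_pmod.
have Qd_small : 2 * Qd <= m by rewrite /Qd /B in QL_le BL_le *; lia.
have D0 : 0 < D by rewrite lt0n; apply/eqP => D0; rewrite D0 in D_eq; lia.
have m20 : 20 <= m.
  suff : 2 ^ 6 <= 2 ^ (32 * k * C.+1 + 4) by lia.
  by rewrite leq_exp2l //; lia.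
split; [done | lia | lia | |].
  by apply: blocks_transcripts_lt_exp2 => //; [exact: leq_div | lia].
apply: cost_ratio_le; first by apply/andP; split; lia.
have : D * (k * B.+1) <= D * (k * (C.+1 * L)) by rewrite leq_mul2l BL_le orbT.
by rewrite /Qd in D_eq D_rem Qd_small; lia.
Qed.

Local Open Scope ring_scope.

Lemma ler_cross_nat (R : numDomainType) (c : R) (a b x e : nat) :
  (0 < b)%N -> a%:R <= c * b%:R -> (x * b <= a * e)%N -> x%:R <= c * e%:R.
Proof.
move=> b0 a_le xb_le.
have cb0 : 0 <= c * b%:R := le_trans (ler0n _ a) a_le.
rewrite -(@ler_pM2r _ b%:R) ?ltr0n //; apply: (@le_trans _ _ (a%:R * e%:R)).
  by rewrite -!natrM ler_nat.
by rewrite mulrAC; apply: ler_wpM2r.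
Qed.

Theorem theorem3 (k : nat) (H : rel 'I_k) :
  (3 <= k)%N -> symmetric H -> irreflexive H ->
  ~ (forall a b : 'I_k, a != b -> H a b) ->
  forall C : nat, exists d : nat, exists n0 : nat,
  forall n : nat, (n0 <= n)%N ->
  forall A : dyn_alg n k,
    bandwidth A (C * trunc_log 2 n) -> correct H A ->
  forall c : rat, amortized_at_most A c ->
    (n%:R : rat) <= c * (d * trunc_log 2 n)%N%:R.
Proof.
move=> k3 Hsym _ not_clique C.
have [r [p2 [rp2 Hrp2]]] := exists_non_edge not_clique.
have [p1 rp1 p12] := exists_third r p2 k3.
exists (1024 * k * k * C.+1)%N, (2 ^ (32 * k * C.+1 + 4) + 2 * k + 2)%N.
case=> [|n] n_large A HB HA c amortized; first by lia.
have [m [D [D0 m0 room few_transcripts n_le]]] := hard_parameters (ltnW (ltnW k3)) n_large.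
apply: (ler_cross_nat _ _ n_le); first by lia.
exact: (amortized_ge_hard Hsym rp1 rp2 p12 Hrp2 room HB HA amortized D0 m0 few_transcripts).
Qed.
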